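(* Let $H:\mathbb{R}^n\to\mathbb{R}$ be $\mu_H$-strongly convex with $\mu_H>0$, let $f^i_{j_i}:\mathbb{R}^n\to\mathbb{R}$ ($i\in[S]$, $j_i\in[I_i]$) be convex, and let $X\subset\mathbb{R}^n$ be nonempty, compact and convex. Let $m:=\sum_{i=1}^S I_i$, $F:=\sum_{i=1}^S\sum_{j_i=1}^{I_i} f^i_{j_i}$, and let $x^*_H$ be the unique solution of the bilevel problem: minimize $H(x)$ subject to $x\in\operatorname{argmin}_{y\in X}F(y)$. Let $\epsilon\in(0,0.5)$, and define $\gamma_k=\frac{\gamma_1}{k^a}$ and $\lambda_k=\frac{\lambda_1}{k^b}$ for $k\ge1$, where $\gamma_1,\lambda_1>0$ with $\gamma_1\lambda_1\mu_H\le 2m$, $a=0.5+0.5\epsilon$ and $b=0.5-\epsilon$. Let $\{x_k\}_{k=1}^\infty$ be a sequence generated by FISM (described in the context) with these stepsizes, and set $\hat x_K:=\frac{\sum_{k=1}^K\gamma_kx_k}{\sum_{k=1}^K\gamma_k}$. Then for $K\ge1$, $$F(\hat x_K)-F(x^*_H)\le\mathcal{O}\Big(\frac{1}{K^{0.5-\epsilon}}\Big).$$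
   Context: Notation: $[s]:=\{1,\dots,s\}$; $P_X$ is the Euclidean metric projection onto $X$; $\partial$ denotes the convex subdifferential; $\mathcal{O}(\cdot)$ hides a constant independent of $K$. FISM (Federated Incremental Subgradient Method): given a starting point $x_1\in\mathbb{R}^n$ and positive stepsizes $\{\gamma_k\},\{\lambda_k\}$, for $k=1,2,\dots$: pick $\mathcal{H}_k\in\partial H(x_k)$; for every client $i\in[S]$ set $x^i_{k,1}=x_k$ and for $j_i=1,\dots,I_i$ pick $g^i_{k,j_i}\in\partial f^i_{j_i}(x^i_{k,j_i})$ and set $x^i_{k,j_i+1}=P_X\big[x^i_{k,j_i}-\gamma_k g^i_{k,j_i}-\frac{\gamma_k\lambda_k}{m}\mathcal{H}_k\big]$; then set $x^i_k=x^i_{k,I_i+1}$ and $x_{k+1}=\frac1S\sum_{i=1}^S x^i_k$. *)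

From HB Require Import structures.
From mathcomp Require Import all_boot all_order all_algebra.
From mathcomp Require Import all_classical all_reals all_analysis.
Set Implicit Arguments. Unset Strict Implicit. Unset Printing Implicit Defensive.
Import Order.TTheory GRing.Theory Num.Theory.
Import numFieldTopology.Exports numFieldNormedType.Exports.
Local Open Scope classical_set_scope.
Local Open Scope ring_scope.

Section Defs.
Variables (R : realType) (n : nat).
Notation vec := 'rV[R]_n.

Definition dotp (u v : vec) : R := \sum_(j < n) u ord0 j * v ord0 j.
Definition sqnorm (u : vec) : R := dotp u u.

Definition convex_set_E (X : set vec) : Prop :=
  forall x y (t : R), X x -> X y -> 0 <= t <= 1 -> X (t *: x + (1 - t) *: y).

Definition convex_fun (h : vec -> R) : Prop :=
  forall x y (t : R), 0 <= t <= 1 ->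
    h (t *: x + (1 - t) *: y) <= t * h x + (1 - t) * h y.

Definition strongly_convex (mu : R) (h : vec -> R) : Prop :=
  forall x y (t : R), 0 <= t <= 1 ->
    h (t *: x + (1 - t) *: y) <=
      t * h x + (1 - t) * h y - mu / 2 * t * (1 - t) * sqnorm (x - y).

Definition is_subgrad (h : vec -> R) (x g : vec) : Prop :=
  forall y, h x + dotp g (y - x) <= h y.

Definition is_proj (X : set vec) (z p : vec) : Prop :=
  X p /\ forall y, X y -> sqnorm (z - p) <= sqnorm (z - y).

Definition is_argmin (h : vec -> R) (A : set vec) (x : vec) : Prop :=
  A x /\ forall y, A y -> h x <= h y.

End Defs.

From HB Require Import structures.
From mathcomp Require Import all_boot all_order all_algebra.
From mathcomp Require Import all_classical all_reals all_analysis.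
From mathcomp Require Import ring lra.
Import Order.TTheory GRing.Theory Num.Theory.
Import numFieldTopology.Exports numFieldNormedType.Exports.
Local Open Scope classical_set_scope.
Local Open Scope ring_scope.
Set Implicit Arguments. Unset Strict Implicit. Unset Printing Implicit Defensive.

(* For every point y of X, in particular for x*_H, one FISM round satisfies the incremental
   subgradient inequality
     S |x_(k+1) - y|^2
       <= S |x_k - y|^2 - 2 gamma_k (F(x_k) - F(y)) + c1 gamma_k^2 + c2 gamma_k lambda_k:
   projections onto X do not increase distances to y, the local iterates stay within
   O(gamma_k) of x_k, and all subgradients are bounded on a cube containing X, since a convex
   function on a cube is bounded by its values at the vertices.  Summing over k >= 2 (x_1 need
   not lie in X) and using gamma_k^2 + gamma_k lambda_k = O(k^(eps/2 - 1)) gives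
   sum_k gamma_k (F(x_k) - F(y)) = O(K^(eps/2)), while sum_k gamma_k >= gamma_1 K^(1/2 - eps/2);
   Jensen's inequality for the weighted average xhat_K concludes. *)

Section InnerProduct.
Variables (R : realType) (n : nat).
Local Notation vec := 'rV[R]_n.
Implicit Types u v w : vec.

Lemma dotpC u v : dotp u v = dotp v u.
Proof. by apply: eq_bigr => j _; rewrite mulrC. Qed.

Lemma dotpDl u v w : dotp (u + v) w = dotp u w + dotp v w.
Proof. by rewrite /dotp -big_split; apply: eq_bigr => j _; rewrite mxE mulrDl. Qed.

Lemma dotpZl (a : R) u v : dotp (a *: u) v = a * dotp u v.
Proof. by rewrite /dotp mulr_sumr; apply: eq_bigr => j _; rewrite mxE mulrA. Qed.

Lemma dotpNl u v : dotp (- u) v = - dotp u v.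
Proof. by rewrite -scaleN1r dotpZl mulN1r. Qed.

Lemma dotpBl u v w : dotp (u - v) w = dotp u w - dotp v w.
Proof. by rewrite dotpDl dotpNl. Qed.

Lemma dotpDr u v w : dotp w (u + v) = dotp w u + dotp w v.
Proof. by rewrite dotpC dotpDl !(dotpC w). Qed.

Lemma dotpZr (a : R) u v : dotp v (a *: u) = a * dotp v u.
Proof. by rewrite dotpC dotpZl dotpC. Qed.

Lemma dotpBr u v w : dotp w (u - v) = dotp w u - dotp w v.
Proof. by rewrite dotpC dotpBl !(dotpC w). Qed.

Lemma sqr_coord_le_sqnorm u j : u ord0 j ^+ 2 <= sqnorm u.
Proof.
rewrite /sqnorm /dotp (bigD1 j) //= expr2 lerDl sumr_ge0 // => l _.
by rewrite -expr2 sqr_ge0.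
Qed.

Lemma sqnorm_ge0 u : 0 <= sqnorm u.
Proof. by rewrite /sqnorm /dotp sumr_ge0 // => j _; rewrite -expr2 sqr_ge0. Qed.

Lemma sqnorm_eq0 u : (sqnorm u == 0) = (u == 0).
Proof.
apply/eqP/eqP => [u0|->]; last by rewrite /sqnorm /dotp big1 // => j _; rewrite mxE mul0r.
apply/rowP => j; rewrite mxE; apply/eqP; rewrite -sqrf_eq0 eq_le sqr_ge0 andbT.
by rewrite -u0 sqr_coord_le_sqnorm.
Qed.

Lemma sqnorm0 : sqnorm (0 : vec) = 0.
Proof. by apply/eqP; rewrite sqnorm_eq0. Qed.

Lemma sqnormD u v : sqnorm (u + v) = sqnorm u + 2 * dotp u v + sqnorm v.
Proof. rewrite /sqnorm !dotpDl !dotpDr (dotpC v u); ring. Qed.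

Lemma sqnormB u v : sqnorm (u - v) = sqnorm u - 2 * dotp u v + sqnorm v.
Proof. rewrite /sqnorm !dotpBl !dotpBr (dotpC v u); ring. Qed.

Lemma sqnormZ (a : R) u : sqnorm (a *: u) = a ^+ 2 * sqnorm u.
Proof. rewrite /sqnorm dotpZl dotpZr; ring. Qed.

Lemma sqnormN u : sqnorm (- u) = sqnorm u.
Proof. by rewrite -scaleN1r sqnormZ sqrrN expr1n mul1r. Qed.

Lemma sqnormC u v : sqnorm (u - v) = sqnorm (v - u).
Proof. by rewrite -sqnormN opprB. Qed.

Lemma dotp_le_sqnorm u v : 2 * dotp u v <= sqnorm u + sqnorm v.
Proof. have := sqnorm_ge0 (u - v); rewrite sqnormB; lra. Qed.

Lemma dotp_ge_sqnorm u v : - (2 * dotp u v) <= sqnorm u + sqnorm v.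
Proof. have := sqnorm_ge0 (u + v); rewrite sqnormD; lra. Qed.

Lemma sqnormD_le u v : sqnorm (u + v) <= 2 * sqnorm u + 2 * sqnorm v.
Proof. have := dotp_le_sqnorm u v; rewrite sqnormD; lra. Qed.

Lemma sqnormB_le u v : sqnorm (u - v) <= 2 * sqnorm u + 2 * sqnorm v.
Proof. by rewrite -(sqnormN v) sqnormD_le. Qed.

Lemma sqnorm_le_coord u (c : R) : (forall j, `|u ord0 j| <= c) ->
  sqnorm u <= n%:R * c ^+ 2.
Proof.
move=> uc; apply: (@le_trans _ _ (\sum_(j < n) c ^+ 2)).
  apply: ler_sum => j _; rewrite -expr2 -real_normK ?num_real //.
  by rewrite lerXn2r ?nnegrE ?(le_trans _ (uc j)).
by rewrite sumr_const card_ord mulr_natl.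
Qed.

Lemma sqnorm_convex : convex_fun (@sqnorm R n).
Proof.
move=> u v t /andP[t0 t1]; rewrite /sqnorm /dotp !mulr_sumr -big_split /=.
apply: ler_sum => j _; rewrite !mxE.
have := sqr_ge0 (u ord0 j - v ord0 j); have : 0 <= t * (1 - t) by rewrite mulr_ge0 ?subr_ge0.
nra.
Qed.

End InnerProduct.

Section Convexity.
Variables (R : realType) (n : nat).
Local Notation vec := 'rV[R]_n.
Implicit Types (X : set vec) (phi : vec -> R).

Lemma proj_dotp_le0 X w p y : convex_set_E X -> is_proj X w p -> X y ->
  dotp (w - p) (y - p) <= 0.
Proof.
move=> cX [Xp p_min] Xy; set a := dotp (w - p) (y - p); set s := sqnorm (y - p).
have s0 : 0 <= s by apply: sqnorm_ge0.
rewrite leNgt; apply/negP => a0.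
(* if a > 0, moving from p towards y by t = a / (s + a) would get strictly closer to w *)
pose t := a / (s + a).
have t0 : 0 < t by rewrite divr_gt0 // ltr_wpDl.
have t01 : 0 <= t <= 1 by rewrite ltW //= ler_pdivrMr ?ltr_wpDl // mul1r lerDr.
have := p_min _ (cX _ _ t Xy Xp t01).
have -> : w - (t *: y + (1 - t) *: p) = (w - p) - t *: (y - p).
  by apply/rowP => j; rewrite !mxE; ring.
rewrite (sqnormB (w - p)) sqnormZ dotpZr -/a -/s => le_wp.
have : 2 * a <= t * s by rewrite -(ler_pM2l t0); lra.
have : t * s < a by rewrite /t mulrAC ltr_pdivrMr ?ltr_wpDl //; nra.
lra.
Qed.

Lemma proj_sqnorm_le X w p y : convex_set_E X -> is_proj X w p -> X y ->
  sqnorm (p - y) <= sqnorm (w - y).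
Proof.
move=> cX wp Xy; have := proj_dotp_le0 cX wp Xy.
have -> : w - y = (w - p) - (y - p) by apply/rowP => j; rewrite !mxE; ring.
rewrite (sqnormC p y) (sqnormB (w - p)); have := sqnorm_ge0 (w - p); lra.
Qed.

Lemma sumr_gt0_seq (I : eqType) (r : seq I) (w : I -> R) : r != [::] ->
  (forall i, i \in r -> 0 < w i) -> 0 < \sum_(i <- r) w i.
Proof.
case: r => [//|i r] _ w_gt0; rewrite big_cons ltr_wpDr ?w_gt0 ?mem_head //.
by rewrite big_seq sumr_ge0 // => j jr; rewrite ltW // w_gt0 // in_cons jr orbT.
Qed.

Lemma scale_avg_consE (a s : R) (u v : vec) : 0 < a -> 0 < s ->
  (a + s)^-1 *: (a *: u + v) =
  (a / (a + s)) *: u + (1 - a / (a + s)) *: (s^-1 *: v).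
Proof.
move=> a0 s0; apply/rowP => j; rewrite !mxE.
by field; rewrite !gt_eqF ?ltr_wpDr ?ltW.
Qed.

Lemma weight_cons_ge0_le1 (a s : R) : 0 < a -> 0 < s -> 0 <= a / (a + s) <= 1.
Proof.
move=> a0 s0; have as0 : 0 < a + s by rewrite addr_gt0.
apply/andP; split; first by rewrite divr_ge0 // ltW.
by rewrite ler_pdivrMr // mul1r lerDl ltW.
Qed.

Lemma convex_set_avg X (I : eqType) (r : seq I) (w : I -> R) (p : I -> vec) :
  convex_set_E X -> r != [::] -> (forall i, i \in r -> 0 < w i /\ X (p i)) ->
  X ((\sum_(i <- r) w i)^-1 *: \sum_(i <- r) w i *: p i).
Proof.
move=> cX; elim: r => [//|i r IH] _ wpX; rewrite !big_cons.
have [wi Xi] := wpX i (mem_head _ _).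
have {}wpX j : j \in r -> 0 < w j /\ X (p j).
  by move=> jr; apply: wpX; rewrite in_cons jr orbT.
have [->|r0] := eqVneq r [::].
  by rewrite !big_nil !addr0 scalerA mulVf ?scale1r ?gt_eqF.
have s0 : 0 < \sum_(j <- r) w j by apply: sumr_gt0_seq => // j /wpX[].
rewrite scale_avg_consE //; apply: cX; [by []|exact: IH|exact: weight_cons_ge0_le1].
Qed.

Lemma convex_fun_avg phi (I : eqType) (r : seq I) (w : I -> R) (p : I -> vec) :
  convex_fun phi -> r != [::] -> (forall i, i \in r -> 0 < w i) ->
  (\sum_(i <- r) w i) * phi ((\sum_(i <- r) w i)^-1 *: \sum_(i <- r) w i *: p i)
  <= \sum_(i <- r) w i * phi (p i).
Proof.
move=> cphi; elim: r => [//|i r IH] _ w_gt0; rewrite !big_cons.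
have wi := w_gt0 i (mem_head _ _).
have {}w_gt0 j : j \in r -> 0 < w j by move=> jr; rewrite w_gt0 // in_cons jr orbT.
have [->|r0] := eqVneq r [::].
  by rewrite !big_nil !addr0 scalerA mulVf ?scale1r ?gt_eqF.
have {IH}IH := IH r0 w_gt0; have s0 := sumr_gt0_seq r0 w_gt0.
rewrite scale_avg_consE //.
set s := \sum_(j <- r) w j in s0 IH *; set t := w i / (w i + s).
have := cphi (p i) (s^-1 *: \sum_(j <- r) w j *: p j) t (weight_cons_ge0_le1 wi s0).
have ws0 : 0 < w i + s by rewrite addr_gt0.
rewrite -(ler_pM2l ws0) mulrDr (mulrA _ t) (mulrA _ (1 - t)).
have -> : (w i + s) * t = w i by rewrite /t mulrC divfK ?gt_eqF.
have -> : (w i + s) * (1 - t) = s by rewrite /t; field; rewrite gt_eqF.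
lra.
Qed.

Lemma convex_fun_sum (I : eqType) (r : seq I) (P : pred I) (h : I -> vec -> R) :
  (forall i, i \in r -> P i -> convex_fun (h i)) ->
  convex_fun (fun y => \sum_(i <- r | P i) h i y).
Proof.
move=> ch u v t t01; rewrite !mulr_sumr -big_split /= !(big_seq_cond P).
by apply: ler_sum => i /andP[ir Pi]; apply: ch.
Qed.

Lemma strongly_convex_convex (mu : R) phi :
  0 < mu -> strongly_convex mu phi -> convex_fun phi.
Proof.
move=> mu0 sc u v t t01; apply: le_trans (sc u v t t01) _.
case/andP: t01 => t0 t1; rewrite lerBlDr lerDl.
by rewrite !mulr_ge0 ?sqnorm_ge0 ?subr_ge0 // ?invr_ge0 ?ltW.
Qed.

End Convexity.

Section Cube.
Variables (R : realType) (n : nat).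
Local Notation vec := 'rV[R]_n.
Implicit Types (phi : vec -> R) (M B : R) (y : vec).

Definition cube M y := forall j, `|y ord0 j| <= M.

Lemma cube_le M M' y : M <= M' -> cube M y -> cube M' y.
Proof. by move=> MM' yM j; apply: le_trans MM'. Qed.

Lemma cube_sqnorm_sub_le M u v : cube M u -> cube M v ->
  sqnorm (u - v) <= n%:R * (2 * M) ^+ 2.
Proof.
move=> uM vM; apply: sqnorm_le_coord => j; rewrite !mxE.
by rewrite (le_trans (ler_normB _ _)) // mulr2n mulrDl mul1r lerD.
Qed.

Lemma convex_fun_le_max phi u v (t : R) : convex_fun phi -> 0 <= t <= 1 ->
  phi (t *: u + (1 - t) *: v) <= Num.max (phi u) (phi v).
Proof.
move=> cphi /andP[t0 t1]; apply: le_trans (cphi u v t _) _; first by rewrite t0.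
have : phi u <= Num.max (phi u) (phi v) by rewrite le_max lexx.
have : phi v <= Num.max (phi u) (phi v) by rewrite le_max lexx orbT.
have : 0 <= 1 - t by rewrite subr_ge0.
nra.
Qed.

Lemma convex_fun_push_coord phi M y j : convex_fun phi -> cube M y ->
  exists y', [/\ cube M y', `|y' ord0 j| = M,
    forall l, l != j -> y' ord0 l = y ord0 l & phi y <= phi y'].
Proof.
move=> cphi yM; have M0 : 0 <= M := le_trans (normr_ge0 _) (yM j).
have [M_eq0|M_gt0] := eqVneq M 0.
  subst M; exists y; split=> //.
  by apply/eqP; rewrite normr_eq0 -normr_le0 yM.
have {M_gt0}M_gt0 : 0 < M by rewrite lt_neqAle eq_sym M_gt0.
pose yc (c : R) : vec := \row_l (if l == j then c else y ord0 l).
have yc_cube c : `|c| <= M -> cube M (yc c).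
  by move=> cM l; rewrite mxE; case: eqVneq.
have yc_other c l : l != j -> yc c ord0 l = y ord0 l by rewrite mxE => /negbTE->.
have yc_j c : yc c ord0 j = c by rewrite mxE eqxx.
(* y lies on the segment between the two faces y_j = M and y_j = -M *)
pose t := (y ord0 j + M) / (2 * M).
have := yM j; rewrite ler_norml => /andP[yj_ge yj_le].
have t01 : 0 <= t <= 1.
  by rewrite divr_ge0 ?mulr_ge0 /= ?ler_pdivrMr ?mulr_gt0 //; lra.
have ey : t *: yc M + (1 - t) *: yc (- M) = y.
  apply/rowP => l; rewrite !mxE; case: eqVneq => [->|_]; last by ring.
  by rewrite /t; field; rewrite gt_eqF.
have := convex_fun_le_max (yc M) (yc (- M)) cphi t01; rewrite ey.
have normM : `|M| = M by rewrite ger0_norm.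
have yc_M c : `|c| = M -> cube M (yc c) /\ `|yc c ord0 j| = M.
  by move=> cM; rewrite yc_j cM; split=> //; apply: yc_cube; rewrite cM.
have := yc_M (- M); rewrite normrN => /(_ normM) [ycN_cube ycN_j].
have [ycP_cube ycP_j] := yc_M M normM.
case: (leP (phi (yc M)) (phi (yc (- M)))) => _ le_phi;
  [exists (yc (- M)) | exists (yc M)]; split=> //.
  by move=> l lj; rewrite yc_other.
by move=> l lj; rewrite yc_other.
Qed.

Lemma convex_fun_ub_cube phi M : convex_fun phi ->
  exists B, forall y, cube M y -> phi y <= B.
Proof.
move=> cphi; pose vertex (s : {ffun 'I_n -> bool}) : vec :=
  \row_j (if s j then M else - M).
exists (\sum_s `|phi (vertex s)|) => y yM.
have push k : (k <= n)%N -> exists y', [/\ cube M y',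
    forall j : 'I_n, (j < k)%N -> `|y' ord0 j| = M & phi y <= phi y'].
  elim: k => [|k IH] kn; first by exists y.
  have [y1 [y1M y1_vert le_y1]] := IH (ltnW kn).
  have [y2 [y2M y2_k y2_other le_y2]] :=
    convex_fun_push_coord (Ordinal kn) cphi y1M.
  exists y2; split; [by []| |exact: le_trans le_y2].
  move=> j; rewrite ltnS leq_eqVlt => /orP[/eqP jk|jk].
    by have -> : j = Ordinal kn by apply/val_inj.
  rewrite y2_other ?y1_vert //.
  by apply/eqP => /(congr1 val) /= jk'; rewrite jk' ltnn in jk.
have [y' [_ y'_vert le_y']] := push n (leqnn n).
apply: le_trans le_y' _.
have -> : y' = vertex [ffun j => 0 <= y' ord0 j].
  apply/rowP => j; rewrite !mxE ffunE -(y'_vert j (ltn_ord j)).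
  by case: (lerP 0) => [/ger0_norm|/ltr0_norm] ->; rewrite ?opprK.
apply: le_trans (ler_norm _) _.
by rewrite (bigD1 [ffun j => 0 <= y' ord0 j]) //= lerDl sumr_ge0.
Qed.

Lemma convex_fun_bounded_cube phi M : convex_fun phi ->
  exists B, 0 <= B /\ forall y, cube M y -> `|phi y| <= B.
Proof.
move=> cphi; have [B phiB] := convex_fun_ub_cube M cphi.
exists (`|B| + 2 * `|phi 0|); split=> [|y yM]; first by rewrite addr_ge0 ?mulr_ge0.
have NyM : cube M (- y) by move=> j; rewrite mxE normrN.
(* convexity at 0 = (y + (-y)) / 2 bounds phi y from below *)
have half01 : 0 <= (2^-1 : R) <= 1 by rewrite invr_ge0 ler0n invf_le1 ?ler1n.
have := cphi y (- y) 2^-1 half01.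
have -> : 2^-1 *: y + (1 - 2^-1) *: - y = 0 :> vec.
  by apply/rowP => j; rewrite !mxE; field.
have := phiB _ yM; have := phiB _ NyM; have := ler_norm B.
have := ler_norm (phi 0); have := ler_norm (- phi 0); rewrite normrN.
rewrite ler_norml; move=> *; apply/andP; split; lra.
Qed.

Lemma subgrad_coord_le phi M B z g j :
  (forall y, cube (M + 1) y -> `|phi y| <= B) -> cube M z ->
  is_subgrad phi z g -> `|g ord0 j| <= 2 * B.
Proof.
move=> phiB zM gz.
have zM1 : cube (M + 1) z by apply: cube_le zM; rewrite lerDl.
suff g_le s : `|s| = 1 -> g ord0 j * s <= 2 * B.
  have := g_le 1 (normr1 R); have := g_le (-1) (normrN1 R).
  rewrite ler_norml; lra.
move=> s1; pose e : vec := \row_l (if l == j then s else 0).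
have ze_cube : cube (M + 1) (z + e).
  move=> l; rewrite !mxE; apply: le_trans (ler_normD _ _) (lerD (zM l) _).
  by case: eqVneq; rewrite ?normr0 ?s1.
have := gz (z + e); have -> : z + e - z = e by rewrite addrC addKr.
have -> : dotp g e = g ord0 j * s.
  rewrite /dotp (bigD1 j) //= mxE eqxx big1 ?addr0 // => l /negbTE lj.
  by rewrite mxE lj mulr0.
have := phiB _ ze_cube; have := phiB _ zM1; rewrite !ler_norml; lra.
Qed.

Lemma subgrad_sqnorm_le phi M B z g :
  (forall y, cube (M + 1) y -> `|phi y| <= B) -> cube M z ->
  is_subgrad phi z g -> sqnorm g <= n%:R * (2 * B) ^+ 2.
Proof.
by move=> phiB zM gz; apply: sqnorm_le_coord => j; exact: subgrad_coord_le phiB zM gz.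
Qed.

Lemma convex_fun_lipschitz phi M B u v : convex_fun phi ->
  (forall y, cube (M + 1) y -> `|phi y| <= B) -> cube M u -> cube M v ->
  phi v - phi u <= 2 * B * Num.sqrt (sqnorm (v - u)).
Proof.
move=> cphi phiB uM vM.
have uM1 : cube (M + 1) u by apply: cube_le uM; rewrite lerDl.
have B0 : 0 <= B := le_trans (normr_ge0 _) (phiB _ uM1).
set r := Num.sqrt _; have [r_eq0|r_gt0] := eqVneq r 0.
  move/eqP: r_eq0; rewrite sqrtr_eq0 le_eqVlt ltNge sqnorm_ge0 orbF sqnorm_eq0 subr_eq0.
  by move=> /eqP->; rewrite subrr mulr_ge0 ?mulr_ge0 ?sqrtr_ge0.
have {r_gt0}r_gt0 : 0 < r by rewrite lt_neqAle eq_sym r_gt0 sqrtr_ge0.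
have coord j : `|(v - u) ord0 j| <= r.
  rewrite -ler_sqr ?nnegrE ?sqrtr_ge0 // sqr_sqrtr ?sqnorm_ge0 //.
  by rewrite real_normK ?num_real // sqr_coord_le_sqnorm.
(* extend [u, v] beyond v by a step of sup-norm 1, staying in cube (M + 1) *)
pose w := v + r^-1 *: (v - u).
have wM1 : cube (M + 1) w.
  move=> j; rewrite mxE; apply: le_trans (ler_normD _ _) (lerD (vM j) _).
  rewrite mxE normrM ger0_norm ?invr_ge0 ?(ltW r_gt0) // ler_pdivrMl // mulr1; exact: coord.
pose t := (1 + r)^-1.
have t01 : 0 <= t <= 1 by rewrite invr_ge0 invf_le1; lra.
have := cphi u w t t01.
have -> : t *: u + (1 - t) *: w = v.
  apply/rowP => j; rewrite /w !mxE /t; field.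
  by rewrite !gt_eqF // ltr_wpDl.
move=> conv_v.
have := phiB _ wM1; have := phiB _ uM1; rewrite !ler_norml => /andP[? ?] /andP[? ?].
have t1 : 0 <= 1 - t by rewrite subr_ge0; case/andP: t01.
have : (1 - t) * (phi w - phi u) <= (1 - t) * (2 * B) by rewrite ler_wpM2l //; lra.
have : (1 - t) * (2 * B) <= r * (2 * B).
  have -> : 1 - t = r * t by rewrite /t; field; rewrite gt_eqF // ltr_wpDl.
  rewrite -mulrA ler_wpM2l ?(ltW r_gt0) // ler_piMl ?mulr_ge0 //; by case/andP: t01.
lra.
Qed.

Lemma convex_fun_young phi M B u v (c : R) : convex_fun phi ->
  (forall y, cube (M + 1) y -> `|phi y| <= B) -> cube M u -> cube M v -> 0 <= c ->
  2 * c * (phi v - phi u) <= c ^+ 2 * (2 * B) ^+ 2 + sqnorm (v - u).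
Proof.
move=> cphi phiB uM vM c0; have lip := convex_fun_lipschitz cphi phiB uM vM.
have r2 := sqr_sqrtr (sqnorm_ge0 (v - u)).
set r := Num.sqrt _ in lip r2; rewrite -r2.
have : 2 * c * (phi v - phi u) <= 2 * c * (2 * B * r) by rewrite ler_wpM2l ?mulr_ge0.
have := sqr_ge0 (c * (2 * B) - r); nra.
Qed.

End Cube.

Section Averages.
Variables (R : realType) (n : nat).
Local Notation vec := 'rV[R]_n.

Lemma mean_avgE (S : nat) (p : 'I_S -> vec) :
  S%:R^-1 *: \sum_(i < S) p i = (\sum_(i < S) (1 : R))^-1 *: \sum_(i < S) 1 *: p i.
Proof. by rewrite sumr_const card_ord; under [in RHS]eq_bigr do rewrite scale1r. Qed.

Lemma index_enum_ord_neq0 (S : nat) : (0 < S)%N -> index_enum 'I_S != [::].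
Proof. by move=> S0; apply/eqP => e; have := mem_index_enum (Ordinal S0); rewrite e. Qed.

Lemma convex_set_mean (X : set vec) (S : nat) (p : 'I_S -> vec) :
  convex_set_E X -> (0 < S)%N -> (forall i, X (p i)) -> X (S%:R^-1 *: \sum_(i < S) p i).
Proof.
move=> cX S0 Xp; rewrite mean_avgE; apply: convex_set_avg => //.
exact: index_enum_ord_neq0.
Qed.

Lemma convex_fun_mean (phi : vec -> R) (S : nat) (p : 'I_S -> vec) :
  convex_fun phi -> (0 < S)%N ->
  S%:R * phi (S%:R^-1 *: \sum_(i < S) p i) <= \sum_(i < S) phi (p i).
Proof.
move=> cphi S0; rewrite mean_avgE.
have := convex_fun_avg p cphi (index_enum_ord_neq0 S0) (fun _ _ => @ltr01 R).
by rewrite sumr_const card_ord; under [in X in _ <= X -> _]eq_bigr do rewrite mul1r.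
Qed.

Definition wavg (w : nat -> R) (x : nat -> vec) (K : nat) : vec :=
  (\sum_(1 <= k < K.+1) w k)^-1 *: \sum_(1 <= k < K.+1) w k *: x k.

Lemma wavg_gap_le (phi : vec -> R) (w : nat -> R) (x : nat -> vec) (y : vec)
    (K : nat) (A c : R) :
  convex_fun phi -> (1 <= K)%N -> (forall k, (1 <= k)%N -> 0 < w k) ->
  0 < c -> c <= \sum_(1 <= k < K.+1) w k -> 0 <= A ->
  \sum_(1 <= k < K.+1) w k * (phi (x k) - phi y) <= A ->
  phi (wavg w x K) - phi y <= A / c.
Proof.
move=> cphi K1 w_gt0 c0 c_le A0 sum_le.
have r_neq0 : index_iota 1 K.+1 != [::] by rewrite /index_iota subn1 /=; case: (K) K1.
have w_gt0' k : k \in index_iota 1 K.+1 -> 0 < w k.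
  by rewrite mem_index_iota => /andP[k1 _]; apply: w_gt0.
have jensen := convex_fun_avg x cphi r_neq0 w_gt0'.
set W := \sum_(1 <= k < K.+1) w k in c_le jensen.
have W0 : 0 < W := lt_le_trans c0 c_le.
have {}sum_le : W * (phi (wavg w x K) - phi y) <= A.
  apply: le_trans sum_le; rewrite mulrBr.
  under [X in _ <= X]eq_bigr do rewrite mulrBr.
  by rewrite sumrB -mulr_suml lerB.
have [D_le0|D_gt0] := lerP (phi (wavg w x K) - phi y) 0.
  by apply: le_trans D_le0 _; rewrite divr_ge0 // ltW.
by rewrite ler_pdivlMr // (le_trans _ sum_le) // mulrC ler_pM2r.
Qed.

End Averages.

Section Powers.
Variable R : realType.

Lemma natr_powR_gt0 (k : nat) (r : R) : (1 <= k)%N -> 0 < k%:R `^ r.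
Proof. by move=> k1; rewrite powR_gt0 // ltr0n. Qed.

Lemma natr_powR_ge1 (k : nat) (r : R) : (1 <= k)%N -> 0 <= r ->
  1 <= k%:R `^ r.
Proof.
move=> k1 r0; apply: (@le_trans _ _ (k%:R `^ 0)); first by rewrite powRr0.
by rewrite ler_powR ?ler1n.
Qed.

Lemma powR_decay_gt0 (c p : R) (k : nat) : 0 < c -> (1 <= k)%N ->
  0 < c / k%:R `^ p.
Proof. by move=> c0 k1; rewrite divr_gt0 ?natr_powR_gt0. Qed.

Lemma powR_decay_le (c p : R) (k : nat) : 0 <= c -> 0 <= p -> (1 <= k)%N ->
  c / k%:R `^ p <= c.
Proof.
move=> c0 p0 k1; rewrite ler_pdivrMr ?natr_powR_gt0 //.
by rewrite ler_peMr // natr_powR_ge1.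
Qed.

Lemma powR_le_affine (x q : R) : 0 <= x -> 0 < q -> q < 1 ->
  x `^ q <= q * x + (1 - q).
Proof.
move=> x0 q0 q1.
have qV_gt0 : 0 < q^-1 by rewrite invr_gt0.
have q'V_gt0 : 0 < (1 - q)^-1 by rewrite invr_gt0 subr_gt0.
have := conjugate_powR (powR_ge0 x q) ler01 qV_gt0 q'V_gt0.
rewrite !invrK mulr1 powR1 -powRrM mulfV ?gt_eqF // powRr1 // => le_young.
by rewrite mulrC -[1 - q]mul1r le_young // addrC subrK.
Qed.

Lemma powR_succ_sub_ge (k : nat) (q : R) : 0 < q -> q < 1 ->
  q / (k.+1%:R `^ (1 - q)) <= k.+1%:R `^ q - k%:R `^ q.
Proof.
move=> q0 q1; set K : R := k.+1%:R.
have K0 : 0 < K by rewrite ltr0n.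
have Kq : 0 < K `^ q by apply: powR_gt0.
pose x := k%:R / K; have x0 : 0 <= x by rewrite divr_ge0 // ltW.
have -> : k%:R = x * K by rewrite /x mulfVK ?gt_eqF.
rewrite powRB ?gt_eqF ?implybT // powRr1 ?(ltW K0) // (powRM _ x0 (ltW K0)).
have -> : q / (K / K `^ q) = q * (1 - x) * K `^ q.
  by rewrite /x; field; rewrite !gt_eqF.
have : x `^ q * K `^ q <= (q * x + (1 - q)) * K `^ q.
  by rewrite ler_pM2r // powR_le_affine.
nra.
Qed.

Lemma sum_inv_powR_le (K : nat) (q : R) : 0 < q -> q < 1 ->
  \sum_(1 <= k < K.+1) 1 / (k%:R `^ (1 - q)) <= K%:R `^ q / q.
Proof.
move=> q0 q1; elim: K => [|K IH]; first by rewrite big_geq // powR0 ?mul0r ?gt_eqF.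
rewrite big_nat_recr //=.
have -> : K.+1%:R `^ q / q = K%:R `^ q / q + (K.+1%:R `^ q - K%:R `^ q) / q.
  by field; rewrite gt_eqF.
apply: lerD => //; rewrite ler_pdivlMr // mulrC mulrA mulr1.
exact: powR_succ_sub_ge.
Qed.

Lemma weighted_sum_le_powR (w d t : nat -> R) (c0 C q : R) :
  0 < q -> q < 1 -> 0 <= c0 -> 0 <= C ->
  (forall k, (1 <= k)%N -> t k <= C / k%:R `^ (1 - q)) ->
  (forall K, 2 * \sum_(2 <= k < K.+2) w k * d k <= c0 + \sum_(2 <= k < K.+2) t k) ->
  forall K, (1 <= K)%N ->
  \sum_(1 <= k < K.+1) w k * d k <=
    (`|w 1%N * d 1%N| + c0 / 2 + C / (2 * q)) * K%:R `^ q.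
Proof.
move=> q0 q1 c00 C0 t_le sum_le [//|K] _; set Kq := K.+1%:R `^ q.
have Kq1 : 1 <= Kq by apply: natr_powR_ge1 => //; exact: ltW.
have sum_t : \sum_(2 <= k < K.+2) t k <= C / q * Kq.
  apply: (@le_trans _ _ (\sum_(1 <= k < K.+2) C * (1 / k%:R `^ (1 - q)))).
    rewrite [X in _ <= X](big_ltn (m := 1)) // ler_wpDl ?mulr_ge0 //.
    by apply: ler_sum_nat => k /andP[k2 _]; rewrite div1r t_le // ltnW.
  by rewrite -mulr_sumr mulrAC -mulrA ler_wpM2l // sum_inv_powR_le.
have := sum_le K; rewrite (big_ltn (m := 1)) //.
have : `|w 1%N * d 1%N| <= `|w 1%N * d 1%N| * Kq by rewrite ler_peMr.
have : c0 / 2 <= c0 / 2 * Kq by rewrite ler_peMr ?divr_ge0.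
have : C / (2 * q) * Kq = C / q * Kq / 2 by field; rewrite gt_eqF.
have := ler_norm (w 1%N * d 1%N).
lra.
Qed.

End Powers.

Section Stepsizes.
Variables (R : realType) (gamma1 lambda1 eps : R) (gamma lambda : nat -> R).
Hypotheses (eps_gt0 : 0 < eps) (eps_lt : eps < 1 / 2).
Hypotheses (gamma1_gt0 : 0 < gamma1) (lambda1_gt0 : 0 < lambda1).
Hypothesis gammaE : forall k, gamma k = gamma1 / k%:R `^ (1 / 2 + eps / 2).
Hypothesis lambdaE : forall k, lambda k = lambda1 / k%:R `^ (1 / 2 - eps).

Lemma stepsize_err_le (c1 c2 : R) k : 0 <= c1 -> 0 <= c2 -> (1 <= k)%N ->
  gamma k ^+ 2 * c1 + gamma k * lambda k * c2 <=
    (gamma1 ^+ 2 * c1 + gamma1 * lambda1 * c2) / k%:R `^ (1 - eps / 2).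
Proof.
move=> c10 c20 k1; have k0 : k%:R != 0 :> R by rewrite pnatr_eq0 -lt0n.
have ka_gt0 := natr_powR_gt0 (1 / 2 + eps / 2) k1.
have kb_gt0 := natr_powR_gt0 (1 / 2 - eps) k1.
rewrite gammaE lambdaE mulrDl; apply: lerD.
  rewrite expr_div_n mulrAC; apply: ler_wpM2l; first by rewrite mulr_ge0 ?sqr_ge0.
  rewrite lef_pV2 ?posrE ?exprn_gt0 ?natr_powR_gt0 // -powR_mulrn ?ler0n //.
  by rewrite -powRrM ler_powR ?ler1n //; move: eps_gt0; lra.
have -> : k%:R `^ (1 - eps / 2) = k%:R `^ (1 / 2 + eps / 2) * k%:R `^ (1 / 2 - eps).
  by rewrite -powRD ?k0 ?implybT //; congr (_ `^ _); field.
by rewrite le_eqVlt; apply/orP; left; apply/eqP; field; rewrite !gt_eqF.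
Qed.

Lemma sum_gamma_ge K : (1 <= K)%N ->
  gamma1 * (K%:R `^ (eps / 2) * K%:R `^ (1 / 2 - eps)) <= \sum_(1 <= k < K.+1) gamma k.
Proof.
move=> K1; have K0 : K%:R != 0 :> R by rewrite pnatr_eq0 -lt0n.
apply: (@le_trans _ _ (\sum_(1 <= k < K.+1) gamma K)); last first.
  apply: ler_sum_nat => k /andP[k1 kK]; rewrite !gammaE ler_wpM2l ?(ltW gamma1_gt0) //.
  rewrite lef_pV2 ?posrE ?natr_powR_gt0 // ge0_ler_powR ?nnegrE ?ler0n ?ler_nat //.
  by move: eps_gt0; lra.
rewrite sumr_const_nat subSS subn0 -[gamma K *+ K]mulr_natl gammaE [leRHS]mulrCA.
rewrite -powRD ?K0 ?implybT // ler_wpM2l ?(ltW gamma1_gt0) //.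
rewrite -[X in _ <= X / _]powRr1 ?ler0n // -powRB ?K0 ?implybT //.
by rewrite le_eqVlt; apply/orP; left; apply/eqP; congr (_ `^ _); field.
Qed.

Lemma wavg_gap_rate n (phi : 'rV[R]_n -> R) (x : nat -> 'rV[R]_n) (y : 'rV[R]_n)
    (c0 c1 c2 : R) :
  convex_fun phi -> 0 <= c0 -> 0 <= c1 -> 0 <= c2 ->
  (forall K, 2 * \sum_(2 <= k < K.+2) gamma k * (phi (x k) - phi y) <=
    c0 + \sum_(2 <= k < K.+2) (gamma k ^+ 2 * c1 + gamma k * lambda k * c2)) ->
  exists C, forall K, (1 <= K)%N ->
    phi (wavg gamma x K) - phi y <= C / K%:R `^ (1 / 2 - eps).
Proof.
move=> phi_convex c0_ge0 c1_ge0 c2_ge0 gap_sum.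
set q := eps / 2; set C := gamma1 ^+ 2 * c1 + gamma1 * lambda1 * c2.
have C_ge0 : 0 <= C by rewrite /C addr_ge0 ?mulr_ge0 ?sqr_ge0 // ltW.
have q_gt0 : 0 < q by rewrite /q; move: eps_gt0; lra.
have q_lt1 : q < 1 by rewrite /q; move: eps_lt; lra.
have sum_le := weighted_sum_le_powR (d := fun k => phi (x k) - phi y)
  q_gt0 q_lt1 c0_ge0 C_ge0 (fun k => stepsize_err_le c1_ge0 c2_ge0) gap_sum.
set C0 := `|gamma 1%N * (phi (x 1%N) - phi y)| + c0 / 2 + C / (2 * q) in sum_le.
have C0_ge0 : 0 <= C0 by rewrite /C0 !addr_ge0 ?divr_ge0 ?mulr_ge0 // ltW.
exists (C0 / gamma1) => K K1.
have Kq_gt0 := natr_powR_gt0 q K1; have Kb_gt0 := natr_powR_gt0 (1 / 2 - eps) K1.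
have c_gt0 : 0 < gamma1 * (K%:R `^ q * K%:R `^ (1 / 2 - eps)) by rewrite !mulr_gt0.
have A_ge0 : 0 <= C0 * K%:R `^ q by rewrite mulr_ge0 // ltW.
have gamma_gt0 k : (1 <= k)%N -> 0 < gamma k by rewrite gammaE; apply: powR_decay_gt0.
apply: le_trans (wavg_gap_le phi_convex K1 gamma_gt0 c_gt0 (sum_gamma_ge K1) A_ge0
  (sum_le K K1)) _.
by rewrite le_eqVlt; apply/orP; left; apply/eqP; field; rewrite !gt_eqF.
Qed.

End Stepsizes.

Section Boundedness.
Variables (R : realType) (n : nat).
Local Notation vec := 'rV[R]_n.

Lemma compact_in_cube (X : set vec) : compact X -> exists M, forall z, X z -> cube M z.
Proof.
move=> /compact_bounded[M [_ normM]]; exists (`|M| + 1) => z Xz j.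
have M_lt : M < `|M| + 1 by rewrite (le_lt_trans (ler_norm M)) // ltrDl.
apply: le_trans (normM _ M_lt z Xz).
have /mapP[ij _ ->] : `|z ord0 j| \in [seq `|z ij.1 ij.2| | ij : 'I_1 * 'I_n].
  by apply/mapP; exists (ord0, j); rewrite ?mem_enum.
by rewrite [leRHS]/Num.norm /= mx_normrE; apply/bigmax_geP; right; exists ij.
Qed.

Lemma compact_convex_family_bounded (X : set vec) (S : nat) (I : 'I_S -> nat)
    (H : vec -> R) (f : 'I_S -> nat -> vec -> R) :
  compact X -> convex_fun H -> (forall i j, (1 <= j <= I i)%N -> convex_fun (f i j)) ->
  exists M B, [/\ forall z, X z -> cube M z,
    forall z, cube (M + 1) z -> `|H z| <= B &
    forall i j, (1 <= j <= I i)%N -> forall z, cube (M + 1) z -> `|f i j z| <= B].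
Proof.
move=> cX cH cf; have [M XM] := compact_in_cube cX.
have [BH [BH0 HB]] := convex_fun_bounded_cube (M + 1) cH.
have fB (ij : 'I_S * nat) : exists B, 0 <= B /\ ((1 <= ij.2 <= I ij.1)%N ->
    forall z, cube (M + 1) z -> `|f ij.1 ij.2 z| <= B).
  have [ij_in|_] := boolP (1 <= ij.2 <= I ij.1)%N; last by exists 0.
  by have [B [B0 fB]] := convex_fun_bounded_cube (M + 1) (cf _ _ ij_in); exists B.
have [Bf Bf_spec] := choice fB.
have Bf0 ij : 0 <= Bf ij by have [] := Bf_spec ij.
exists M, (BH + \sum_(i < S) \sum_(1 <= j < (I i).+1) Bf (i, j)); split=> //.
  move=> z zM; rewrite (le_trans (HB z zM)) // lerDl.
  by rewrite sumr_ge0 // => i _; rewrite sumr_ge0.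
move=> i j ij z zM; have [_ /(_ ij z zM) le_Bf] := Bf_spec (i, j).
rewrite (le_trans le_Bf) // ler_wpDl // (bigD1 i) //= ler_wpDr //.
  by rewrite sumr_ge0 // => k _; rewrite sumr_ge0.
by rewrite (big_rem j) ?mem_index_iota ?ltnS //= ler_wpDr // big_seq sumr_ge0.
Qed.

End Boundedness.

Section FISM.
Variables (R : realType) (n S : nat) (I : 'I_S -> nat).
Local Notation vec := 'rV[R]_n.
Variables (H : vec -> R) (f : 'I_S -> nat -> vec -> R) (X : set vec) (y : vec).
Variables (gamma lambda : nat -> R) (lambda1 M B : R).
Variables (x Hsub : nat -> vec) (xloc g : nat -> 'I_S -> nat -> vec).
Local Notation m := (\sum_(i < S) I i)%N.
Local Notation F z := (\sum_(i < S) \sum_(1 <= j < (I i).+1) f i j z).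

Hypotheses (S_gt0 : (0 < S)%N) (I_gt0 : forall i, (0 < I i)%N).
Hypothesis f_convex : forall i j, (1 <= j <= I i)%N -> convex_fun (f i j).
Hypotheses (X_convex : convex_set_E X) (Xy : X y).
Hypothesis X_cube : forall z, X z -> cube M z.
Hypothesis H_bounded : forall z, cube (M + 1) z -> `|H z| <= B.
Hypothesis f_bounded :
  forall i j, (1 <= j <= I i)%N -> forall z, cube (M + 1) z -> `|f i j z| <= B.
Hypothesis gamma_gt0 : forall k, (1 <= k)%N -> 0 < gamma k.
Hypothesis lambda_gt0 : forall k, (1 <= k)%N -> 0 < lambda k.
Hypothesis lambda_le : forall k, (1 <= k)%N -> lambda k <= lambda1.
Hypothesis Hsub_subgrad : forall k, (1 <= k)%N -> is_subgrad H (x k) (Hsub k).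
Hypothesis xloc_first : forall k i, (1 <= k)%N -> xloc k i 1%N = x k.
Hypothesis xloc_step : forall k i j, (1 <= k)%N -> (1 <= j <= I i)%N ->
  is_subgrad (f i j) (xloc k i j) (g k i j) /\
  is_proj X (xloc k i j - gamma k *: g k i j - (gamma k * lambda k / m%:R) *: Hsub k)
    (xloc k i j.+1).
Hypothesis x_mean : forall k, (1 <= k)%N ->
  x k.+1 = S%:R^-1 *: \sum_(i < S) xloc k i (I i).+1.

Let m_gt0 : (0 < m)%N.
Proof. by rewrite (bigD1 (Ordinal S_gt0)) //= ltn_addr. Qed.

Let I_le_m i : (I i <= m)%N.
Proof. by rewrite (bigD1 i) //= leq_addr. Qed.

Lemma xloc_succ_in_X k i j : (1 <= k)%N -> (1 <= j <= I i)%N -> X (xloc k i j.+1).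
Proof. by move=> k1 ij; have [_ []] := xloc_step k1 ij. Qed.

Lemma x_in_X k : (2 <= k)%N -> X (x k).
Proof.
case: k => [//|k] k2; rewrite x_mean //; apply: convex_set_mean => // i.
by apply: xloc_succ_in_X; rewrite ?leqnn ?andbT.
Qed.

Lemma xloc_in_X k i j : (2 <= k)%N -> (1 <= j <= (I i).+1)%N -> X (xloc k i j).
Proof.
move=> k2; have k1 := ltnW k2; case: j => [//|[|j]] /andP[_ ij].
  by rewrite xloc_first //; apply: x_in_X.
by apply: xloc_succ_in_X => //; rewrite ltnS in ij; rewrite ij.
Qed.

Let G := n%:R * (2 * B) ^+ 2.

Lemma Hsub_sqnorm_le k : (2 <= k)%N -> sqnorm (Hsub k) <= G.
Proof.
move=> k2; apply: subgrad_sqnorm_le H_bounded (X_cube (x_in_X k2)) _.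
exact/Hsub_subgrad/ltnW.
Qed.

Lemma g_sqnorm_le k i j : (2 <= k)%N -> (1 <= j <= I i)%N -> sqnorm (g k i j) <= G.
Proof.
move=> k2 ij; have [gsub _] := xloc_step (ltnW k2) ij.
have ij' : (1 <= j <= (I i).+1)%N by case/andP: ij => -> /leqW.
exact: subgrad_sqnorm_le (f_bounded ij) (X_cube (xloc_in_X k2 ij')) gsub.
Qed.

Let E := 2 * G * (1 + lambda1 ^+ 2).

Lemma H_weight_bounds k : (1 <= k)%N ->
  0 <= gamma k * lambda k / m%:R <= gamma k * lambda k.
Proof.
move=> k1; have gl0 : 0 < gamma k * lambda k by rewrite mulr_gt0 ?gamma_gt0 ?lambda_gt0.
by rewrite divr_ge0 ?(ltW gl0) //= ler_pdivrMr ?ltr0n // ler_peMr ?ler1n ?(ltW gl0).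
Qed.

Lemma step_sqnorm_le k i j : (2 <= k)%N -> (1 <= j <= I i)%N ->
  sqnorm (gamma k *: g k i j + (gamma k * lambda k / m%:R) *: Hsub k) <= gamma k ^+ 2 * E.
Proof.
move=> k2 ij; have k1 := ltnW k2; have g0 := gamma_gt0 k1.
have /andP[c0 c_le] := H_weight_bounds k1.
set c := _ / _ in c0 c_le *.
have c_le' : c <= gamma k * lambda1.
  by rewrite (le_trans c_le) // ler_pM2l ?lambda_le.
apply: le_trans (sqnormD_le _ _) _; rewrite !sqnormZ.
have : c ^+ 2 * sqnorm (Hsub k) <= (gamma k * lambda1) ^+ 2 * G.
  by rewrite ler_pM ?exprn_ge0 ?sqnorm_ge0 ?lerXn2r ?nnegrE ?Hsub_sqnorm_le // (le_trans c0).
have : gamma k ^+ 2 * sqnorm (g k i j) <= gamma k ^+ 2 * G.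
  by rewrite ler_wpM2l ?sqr_ge0 ?g_sqnorm_le.
rewrite /E; lra.
Qed.

Lemma xloc_drift k i j : (2 <= k)%N -> (1 <= j <= (I i).+1)%N ->
  sqnorm (xloc k i j - x k) <= (2 ^+ j - 2) * E * gamma k ^+ 2.
Proof.
move=> k2; have k1 := ltnW k2; elim: j => [//|[|j] IH] /andP[_ ij].
  by rewrite xloc_first // subrr sqnorm0 expr1 subrr !mul0r.
have ij' : (1 <= j.+1 <= I i)%N by rewrite ltnS in ij; rewrite ij.
have [_ proj] := xloc_step k1 ij'.
have := proj_sqnorm_le X_convex proj (x_in_X k2).
have -> : xloc k i j.+1 - gamma k *: g k i j.+1 - (gamma k * lambda k / m%:R) *: Hsub k - x k
    = (xloc k i j.+1 - x k) - (gamma k *: g k i j.+1 + (gamma k * lambda k / m%:R) *: Hsub k).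
  by apply/rowP => l; rewrite !mxE; ring.
move/le_trans => -> //; apply: le_trans (sqnormB_le _ _) _.
have := IH (ltnW ij); have := step_sqnorm_le k2 ij'.
rewrite (exprS _ j.+1); lra.
Qed.

Let E_ge0 : 0 <= E.
Proof. by rewrite /E /G mulr_ge0 ?addr_ge0 ?sqr_ge0 // mulr_ge0 // mulr_ge0 // sqr_ge0. Qed.

Lemma xloc_drift_le k i j : (2 <= k)%N -> (1 <= j <= (I i).+1)%N ->
  sqnorm (xloc k i j - x k) <= 2 ^+ m.+1 * E * gamma k ^+ 2.
Proof.
move=> k2 ij; apply: le_trans (xloc_drift k2 ij) _.
rewrite ler_wpM2r ?sqr_ge0 // ler_wpM2r // lerBlDr ler_wpDr ?ler0n //.
rewrite ler_eXn2l ?ltr1n //; case/andP: ij => _ /leq_trans; apply.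
by rewrite ltnS I_le_m.
Qed.

Let Q := G + n%:R * (2 * M) ^+ 2.
Let c1 := E + (2 * B) ^+ 2 + 2 ^+ m.+1 * E.
Let err k := gamma k ^+ 2 * c1 + gamma k * lambda k * Q.

Lemma fism_inner_step k i j : (2 <= k)%N -> (1 <= j <= I i)%N ->
  sqnorm (xloc k i j.+1 - y) <=
    sqnorm (xloc k i j - y) - 2 * gamma k * (f i j (x k) - f i j y) + err k.
Proof.
move=> k2 ij; have k1 := ltnW k2; have g0 := gamma_gt0 k1.
have ij' : (1 <= j <= (I i).+1)%N by case/andP: ij => -> /leqW.
have [gsub proj] := xloc_step k1 ij.
have /andP[c0 c_le] := H_weight_bounds k1.
have drift := xloc_drift_le k2 ij'; have step := step_sqnorm_le k2 ij.
have zM := X_cube (xloc_in_X k2 ij'); have xM := X_cube (x_in_X k2).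
(* move from xloc k i j to x k at the cost of the drift *)
have young := convex_fun_young (f_convex ij) (f_bounded ij) zM xM (ltW g0).
set z := xloc k i j in gsub proj drift step zM young *.
set c := gamma k * lambda k / m%:R in proj c0 c_le step *.
have := proj_sqnorm_le X_convex proj Xy.
have -> : z - gamma k *: g k i j - c *: Hsub k - y = (z - y) - (gamma k *: g k i j + c *: Hsub k).
  by apply/rowP => l; rewrite !mxE; ring.
rewrite (sqnormB (z - y)) dotpDr !dotpZr.
have sub_le : f i j z - f i j y <= dotp (z - y) (g k i j).
  by have := gsub y; rewrite dotpC -opprB dotpNl; lra.
rewrite sqnormC in drift.
(* the H-term is a perturbation of size gamma k * lambda k *)
have cross : - (2 * dotp (z - y) (Hsub k)) <= Q.
  apply: le_trans (dotp_ge_sqnorm _ _) _; rewrite /Q addrC lerD ?Hsub_sqnorm_le //.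
  exact: cube_sqnorm_sub_le zM (X_cube Xy).
have : gamma k * (f i j z - f i j y) <= gamma k * dotp (z - y) (g k i j).
  by rewrite ler_pM2l.
have : c * (- (2 * dotp (z - y) (Hsub k))) <= gamma k * lambda k * Q.
  apply: le_trans (ler_wpM2l c0 cross) _; rewrite ler_wpM2r //.
  by rewrite /Q /G addr_ge0 // mulr_ge0 // sqr_ge0.
rewrite /err /c1; lra.
Qed.

Lemma fism_client_round k i J : (2 <= k)%N -> (J <= I i)%N ->
  sqnorm (xloc k i J.+1 - y) <= sqnorm (x k - y)
    - 2 * gamma k * \sum_(1 <= j < J.+1) (f i j (x k) - f i j y) + J%:R * err k.
Proof.
move=> k2; elim: J => [|J IH] JI.
  by rewrite big_geq // xloc_first ?(ltnW k2) // mulr0 mul0r subr0 addr0.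
have ij : (1 <= J.+1 <= I i)%N by rewrite JI.
rewrite -natr1 (big_nat_recr J.+1) //=.
have := fism_inner_step k2 ij; have := IH (ltnW JI); lra.
Qed.

Lemma fism_round k : (2 <= k)%N ->
  S%:R * sqnorm (x k.+1 - y) <=
    S%:R * sqnorm (x k - y) - 2 * gamma k * (F (x k) - F y) + m%:R * err k.
Proof.
move=> k2; have k1 := ltnW k2.
have -> : x k.+1 - y = S%:R^-1 *: \sum_(i < S) (xloc k i (I i).+1 - y).
  rewrite x_mean // sumrB sumr_const card_ord scalerBr -[y *+ S]scaler_nat scalerA.
  by rewrite mulVf ?scale1r ?pnatr_eq0 -?lt0n.
apply: le_trans (convex_fun_mean _ (@sqnorm_convex R n) S_gt0) _.
apply: le_trans (ler_sum _ (fun i _ => fism_client_round k2 (leqnn (I i)))) _.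
rewrite !big_split /= sumr_const card_ord -mulr_natl sumrN -mulr_sumr -mulr_suml.
rewrite -natr_sum -sumrB; under [X in _ - _ * X]eq_bigr do rewrite sumrB.
lra.
Qed.

Lemma fism_gap_sum_le K :
  2 * \sum_(2 <= k < K.+2) gamma k * (F (x k) - F y) + S%:R * sqnorm (x K.+2 - y)
    <= S%:R * sqnorm (x 2 - y) + m%:R * \sum_(2 <= k < K.+2) err k.
Proof.
elim: K => [|K IH]; first by rewrite !big_geq // !mulr0 add0r addr0.
rewrite !(big_nat_recr K.+2 2) //=; have := fism_round (isT : (2 <= K.+2)%N).
lra.
Qed.

Lemma fism_gap_sum_bound : exists c0 c1 c2 : R, [/\ 0 <= c0, 0 <= c1, 0 <= c2 &
  forall K, 2 * \sum_(2 <= k < K.+2) gamma k * (F (x k) - F y) <=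
    c0 + \sum_(2 <= k < K.+2) (gamma k ^+ 2 * c1 + gamma k * lambda k * c2)].
Proof.
have Q_ge0 : 0 <= Q by rewrite /Q /G addr_ge0 // mulr_ge0 // sqr_ge0.
have c1_ge0 : 0 <= c1 by rewrite /c1 !addr_ge0 ?sqr_ge0 // mulr_ge0.
exists (S%:R * sqnorm (x 2 - y)), (m%:R * c1), (m%:R * Q).
split=> [||| K]; rewrite ?mulr_ge0 ?sqnorm_ge0 //.
have -> : \sum_(2 <= k < K.+2) (gamma k ^+ 2 * (m%:R * c1) + gamma k * lambda k * (m%:R * Q))
    = m%:R * \sum_(2 <= k < K.+2) err k.
  by rewrite mulr_sumr; apply: eq_bigr => k _; rewrite /err; ring.
have := fism_gap_sum_le K; have := sqnorm_ge0 (x K.+2 - y).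
have : 0 <= S%:R * sqnorm (x K.+2 - y) by rewrite mulr_ge0 ?sqnorm_ge0.
lra.
Qed.

End FISM.

Theorem theorem2 (R : realType) (n S : nat) (I : 'I_S -> nat)
  (H : 'rV[R]_n -> R) (muH : R) (f : 'I_S -> nat -> 'rV[R]_n -> R)
  (X : set 'rV[R]_n) (xstar : 'rV[R]_n) (eps gamma1 lambda1 : R)
  (x : nat -> 'rV[R]_n) (Hsub : nat -> 'rV[R]_n)
  (xloc : nat -> 'I_S -> nat -> 'rV[R]_n) (g : nat -> 'I_S -> nat -> 'rV[R]_n) :
  let m : nat := (\sum_(i < S) I i)%N in
  let F : 'rV[R]_n -> R := fun y => \sum_(i < S) \sum_(1 <= j < (I i).+1) f i j y in
  let a : R := 1 / 2 + eps / 2 in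
  let b : R := 1 / 2 - eps in
  let gamma : nat -> R := fun k => gamma1 / (k%:R `^ a) in
  let lambda : nat -> R := fun k => lambda1 / (k%:R `^ b) in
  let xhat : nat -> 'rV[R]_n := fun K =>
    (\sum_(1 <= k < K.+1) gamma k)^-1 *: \sum_(1 <= k < K.+1) gamma k *: x k in
  (0 < S)%N ->
  (forall i, (0 < I i)%N) ->
  0 < muH -> strongly_convex muH H ->
  (forall i j, (1 <= j <= I i)%N -> convex_fun (f i j)) ->
  X !=set0 -> compact X -> convex_set_E X ->
  (* xstar solves: minimize H over argmin_{y in X} F y *)
  is_argmin H (is_argmin F X) xstar ->
  0 < eps < 1 / 2 ->
  0 < gamma1 -> 0 < lambda1 -> gamma1 * lambda1 * muH <= 2 * m%:R ->
  (* FISM iterations, k >= 1 *)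
  (forall k, (1 <= k)%N -> is_subgrad H (x k) (Hsub k)) ->
  (forall k i, (1 <= k)%N -> xloc k i 1%N = x k) ->
  (forall k i j, (1 <= k)%N -> (1 <= j <= I i)%N ->
     is_subgrad (f i j) (xloc k i j) (g k i j) /\
     is_proj X (xloc k i j - gamma k *: g k i j
                 - (gamma k * lambda k / m%:R) *: Hsub k) (xloc k i j.+1)) ->
  (forall k, (1 <= k)%N ->
     x k.+1 = S%:R^-1 *: \sum_(i < S) xloc k i (I i).+1) ->
  exists C : R, forall K : nat, (1 <= K)%N ->
    F (xhat K) - F xstar <= C / (K%:R `^ (1 / 2 - eps)).
Proof.
move=> m F a b gamma lambda xhat S_gt0 I_gt0 muH_gt0 H_sc f_convex _ X_compact X_convex
  [[X_xstar _] _] /andP[eps_gt0 eps_lt] gamma1_gt0 lambda1_gt0 _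
  Hsub_subgrad xloc_first xloc_step x_mean.
have [M [B [X_cube H_bounded f_bounded]]] := compact_convex_family_bounded
  X_compact (strongly_convex_convex muH_gt0 H_sc) f_convex.
have b_ge0 : 0 <= b by rewrite /b; lra.
have gamma_gt0 k : (1 <= k)%N -> 0 < gamma k := powR_decay_gt0 _ gamma1_gt0.
have lambda_gt0 k : (1 <= k)%N -> 0 < lambda k := powR_decay_gt0 _ lambda1_gt0.
have lambda_le k : (1 <= k)%N -> lambda k <= lambda1 := powR_decay_le (ltW lambda1_gt0) b_ge0.
have [c0 [c1 [c2 [c0_ge0 c1_ge0 c2_ge0 gap_sum]]]] := fism_gap_sum_bound S_gt0 I_gt0
  f_convex X_convex X_xstar X_cube H_bounded f_bounded gamma_gt0 lambda_gt0 lambda_le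
  Hsub_subgrad xloc_first xloc_step x_mean.
have F_convex : convex_fun F.
  rewrite /F; apply: convex_fun_sum => i _ _; apply: convex_fun_sum => j.
  by rewrite mem_index_iota ltnS => ij _; apply: f_convex.
exact: (wavg_gap_rate eps_gt0 eps_lt gamma1_gt0 lambda1_gt0 (fun=> erefl) (fun=> erefl)
  F_convex c0_ge0 c1_ge0 c2_ge0 gap_sum).
Qed.
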